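(* For every positive integer $n$, the critical exponent satisfies $m(n)\ge n-2$.
   Context: A real $n$-by-$n$ matrix is doubly nonnegative if it is symmetric, positive semidefinite, and entry-wise nonnegative. For positive semidefinite $A=\sum_i\lambda_ix_ix_i^T$ (orthonormal eigenvectors) and $t>0$, $A^t=\sum_i\lambda_i^tx_ix_i^T$. The (conventional) critical exponent $m(n)$ is the least value $m$ such that $A^t$ is doubly nonnegative for all $t\ge m$ and all $n$-by-$n$ doubly nonnegative matrices $A$. *)

From HB Require Import structures.
From mathcomp Require Import all_boot all_order all_algebra.
From mathcomp Require Import boolp classical_sets reals exp.
Set Implicit Arguments. Unset Strict Implicit. Unset Printing Implicit Defensive.
Import Order.TTheory GRing.Theory Num.Theory.
Local Open Scope ring_scope.

Section DNN.
Variables (R : realType) (n : nat).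

Definition symmetric_mx (A : 'M[R]_n) : Prop := A^T = A.

Definition psd_mx (A : 'M[R]_n) : Prop :=
  symmetric_mx A /\ forall x : 'cV[R]_n, 0 <= (x^T *m A *m x) ord0 ord0.

Definition nonneg_mx (A : 'M[R]_n) : Prop := forall i j, 0 <= A i j.

Definition dnn_mx (A : 'M[R]_n) : Prop := psd_mx A /\ nonneg_mx A.

(* (U, d) is a spectral decomposition of A: the columns of U are orthonormal
   eigenvectors x_i, with eigenvalues d_i, i.e. A = sum_i d_i x_i x_i^T. *)
Definition spectral_decomp (A : 'M[R]_n) (p : 'M[R]_n * 'rV[R]_n) : Prop :=
  p.1^T *m p.1 = 1%:M /\ A = p.1 *m diag_mx p.2 *m p.1^T.

(* A^t := sum_i d_i^t x_i x_i^T, for a chosen spectral decomposition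
   (exists for any symmetric A; the result does not depend on the choice
   when A is PSD and t > 0). If no decomposition exists, default to A. *)
Definition mx_rpow (A : 'M[R]_n) (t : R) : 'M[R]_n :=
  let p := xget (0, 0) (spectral_decomp A) in
  if `[< exists q, spectral_decomp A q >]
  then p.1 *m diag_mx (\row_i powR (p.2 0 i) t) *m p.1^T
  else A.

(* m is an admissible exponent: A^t is DNN for all t >= m (t > 0)
   and all n-by-n DNN matrices A. The critical exponent m(n) is the least
   such m. *)
Definition dnn_power_exponent (m : R) : Prop :=
  forall t : R, 0 < t -> m <= t ->
  forall A : 'M[R]_n, dnn_mx A -> dnn_mx (mx_rpow A t).

End DNN.

From HB Require Import structures.
From mathcomp Require Import all_boot all_order all_algebra.
From mathcomp Require Import boolp classical_sets reals exp.
From mathcomp Require Import lra.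
Import Order.TTheory GRing.Theory Num.Theory.
Local Open Scope ring_scope.
Set Implicit Arguments. Unset Strict Implicit. Unset Printing Implicit Defensive.

(* Take the nodes [a_l = 2^l], [l < n], the Vandermonde-type matrix
   [K = (a_l ^ k)_{l,k}] and its QR decomposition [K = Q M]. The matrix
   [T = Q^T diag(a) Q] is positive definite, and since [diag(a) K] is [K] with
   its columns shifted, [T M = Q^T diag(a) K] forces [T] to be tridiagonal with
   positive subdiagonal; so [T] is doubly nonnegative. Now
   [T^t = Q^T diag(a^t) Q] and the first column of [Q] is constant (the first
   column of [K] is all ones), so [(T^t)_{0,n-1}] is a positive multiple of
   [p(2^t)], where [p] has the last column of [Q] as coefficients. At the nodes,
   [p(a_k) = M_{n-1,k}] vanishes for [k < n-1] and is positive for [k = n-1],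
   so [p] has positive leading coefficient and the simple roots
   [a_0 < ... < a_{n-2}]; hence [p(2^t) < 0] for [n-3 < t < n-2]. *)

Lemma diag_mx_intertwine_map (R : idomainType) n (d e : 'rV[R]_n) (W : 'M[R]_n)
    (f : R -> R) :
  diag_mx d *m W = W *m diag_mx e ->
  diag_mx (map_mx f d) *m W = W *m diag_mx (map_mx f e).
Proof.
move=> /matrixP dW; apply/matrixP => i j; have := dW i j.
rewrite !mul_diag_mx !mul_mx_diag !mxE => dWij.
have [->|Wij_neq0] := eqVneq (W i j) 0; first by rewrite mulr0 mul0r.
suff -> : d 0 i = e 0 j by rewrite mulrC.
by apply: (mulIf Wij_neq0); rewrite dWij mulrC.
Qed.

Lemma spectral_decomp_map_eq (R : realType) n (A : 'M[R]_n) (U V : 'M[R]_n)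
    (d e : 'rV[R]_n) (f : R -> R) :
  spectral_decomp A (U, d) -> spectral_decomp A (V, e) ->
  U *m diag_mx (map_mx f d) *m U^T = V *m diag_mx (map_mx f e) *m V^T.
Proof.
move=> [/= UU AU] [/= VV AV]; set W := U^T *m V.
have dW : diag_mx d *m W = W *m diag_mx e.
  have -> : diag_mx d *m W = U^T *m A *m V by rewrite AU !mulmxA UU mul1mx.
  by rewrite AV !mulmxA -(mulmxA _ V^T) VV mulmx1.
rewrite -[LHS]mulmx1 -(mulmx1C VV).
have -> : U *m diag_mx (map_mx f d) *m U^T *m (V *m V^T) =
    U *m (diag_mx (map_mx f d) *m W) *m V^T by rewrite !mulmxA.
by rewrite (diag_mx_intertwine_map _ dW) !mulmxA (mulmx1C UU) mul1mx.
Qed.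

Lemma mx_rpow_spectral (R : realType) n (A U : 'M[R]_n) (d : 'rV[R]_n) t :
  spectral_decomp A (U, d) ->
  mx_rpow A t = U *m diag_mx (map_mx (fun x => powR x t) d) *m U^T.
Proof.
move=> AUd; have exA : exists q, spectral_decomp A q by exists (U, d).
rewrite /mx_rpow asboolT //; have := xgetPex (0, 0) exA.
case: xget => V e AVe /=.
rewrite -(spectral_decomp_map_eq (fun x => powR x t) AVe AUd).
by congr (_ *m diag_mx _ *m _); apply/rowP => i; rewrite !mxE.
Qed.

Definition posdef_mx (R : numDomainType) n (G : 'M[R]_n) : Prop :=
  forall x : 'cV[R]_n, x != 0 -> 0 < (x^T *m G *m x) 0 0.

Lemma trmx_mulmx_self_gt0 (R : realDomainType) n (v : 'cV[R]_n) :
  v != 0 -> 0 < (v^T *m v) 0 0.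
Proof.
move=> v_neq0; have -> : (v^T *m v) 0 0 = \sum_i v i 0 ^+ 2.
  by rewrite mxE; apply: eq_bigr => i _; rewrite mxE expr2.
rewrite lt_def sumr_ge0 ?andbT => [|i _]; last exact: sqr_ge0.
rewrite psumr_eq0 => [|i _]; last exact: sqr_ge0.
apply: contra v_neq0 => /allP v0; apply/eqP/colP => i; rewrite mxE.
by apply/eqP; rewrite -sqrf_eq0 (implyP (v0 i (mem_index_enum i))).
Qed.

Section Cholesky.
Variable R : rcfType.

Lemma posdef_block_ul_gt0 n (a : R) (b : 'cV[R]_n) (C : 'M[R]_n) :
  posdef_mx (block_mx a%:M b^T b C) -> 0 < a.
Proof.
move=> /(_ (col_mx 1%:M 0)); rewrite col_mx_eq0 negb_and oner_neq0 => /(_ isT).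
rewrite tr_col_mx mul_row_block mul_row_col !(trmx0, trmx1, mul0mx, mulmx0).
by rewrite !(mul1mx, mulmx1, addr0) mxE eqxx mulr1n.
Qed.

Lemma posdef_schur n (a : R) (b : 'cV[R]_n) (C : 'M[R]_n) :
  posdef_mx (block_mx a%:M b^T b C) -> posdef_mx (C - a^-1 *: (b *m b^T)).
Proof.
move=> G_pd; have a_neq0 : a != 0 by rewrite gt_eqF ?(posdef_block_ul_gt0 G_pd).
move=> y y_neq0; pose c : 'M_1 := - a^-1 *: (b^T *m y).
have := G_pd (col_mx c y); rewrite col_mx_eq0 (negbTE y_neq0) andbF => /(_ isT).
rewrite tr_col_mx mul_row_block mul_row_col.
have -> : c^T = - a^-1 *: (y^T *m b) by rewrite /c linearZ /= trmx_mul trmxK.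
rewrite mul_mx_scalar scalerA mulrN mulfV // scaleN1r addNr mul0mx add0r.
rewrite mulmxBr mulmxBl -!scalemxAr -!scalemxAl !scaleNr mulmxDl mulNmx.
by rewrite -!scalemxAl !mulmxA addrC.
Qed.

Lemma cholesky n (G : 'M[R]_n) : G^T = G -> posdef_mx G ->
  exists L : 'M_n, [/\ is_trig_mx L, forall i, 0 < L i i & G = L *m L^T].
Proof.
elim: n G => [|n IH] G G_sym G_pd.
  exists 0; split; first exact: mx0_is_trig.
    by case.
  by apply/matrixP => -[].
move: G G_sym G_pd; rewrite -[n.+1]/(1 + n)%N => G G_sym G_pd.
have [a [b [C [G_blk C_sym]]]] :
    exists a b C, G = block_mx a%:M b^T b C /\ C^T = C.
  exists (ulsubmx G 0 0), (dlsubmx G), (drsubmx G).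
  by rewrite -mx11_scalar trmx_dlsub G_sym trmx_drsub G_sym submxK.
rewrite {G_sym}G_blk in G_pd *.
have a_gt0 := posdef_block_ul_gt0 G_pd.
have S_sym : (C - a^-1 *: (b *m b^T))^T = C - a^-1 *: (b *m b^T).
  by rewrite linearB /= linearZ /= trmx_mul trmxK C_sym.
have [L [L_trig L_diag S_chol]] := IH _ S_sym (posdef_schur G_pd).
pose s := Num.sqrt a; have s_gt0 : 0 < s by rewrite sqrtr_gt0.
have s_neq0 : s != 0 by rewrite gt_eqF.
have ss : s * s = a by rewrite -expr2 sqr_sqrtr // ltW.
exists (block_mx s%:M 0 (s^-1 *: b) L); split.
- by rewrite is_trig_block_mx // eqxx scalar_mx_is_trig.
- move=> i; case: (split_ordP i) => k ->; last by rewrite block_mxEdr.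
  by rewrite block_mxEul !mxE ord1 eqxx mulr1n.
rewrite tr_block_mx mulmx_block ?(trmx0, mul0mx, mulmx0, addr0).
rewrite tr_scalar_mx -scalar_mxM ss mul_scalar_mx linearZ /= scalerA mulfV //.
rewrite mul_mx_scalar scalerA mulfV // !scale1r -scalemxAl -scalemxAr scalerA.
by rewrite -invfM ss -S_chol addrC subrK.
Qed.

Lemma qr_decomp n (K : 'M[R]_n) : K \in unitmx ->
  exists Q M : 'M_n,
    [/\ Q^T *m Q = 1%:M, Q^T *m K = M, is_trig_mx M^T & forall i, 0 < M i i].
Proof.
move=> K_unit.
have KK_sym : (K^T *m K)^T = K^T *m K by rewrite trmx_mul trmxK.
have KK_pd : posdef_mx (K^T *m K).
  move=> x x_neq0; rewrite mulmxA -trmx_mul -mulmxA trmx_mulmx_self_gt0 //.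
  by apply: contra x_neq0 => /eqP Kx0; rewrite -(mulKmx K_unit x) Kx0 mulmx0.
have [L [L_trig L_diag KK_chol]] := cholesky KK_sym KK_pd.
have L_unit : L \in unitmx.
  by rewrite unitmxE det_trig // unitfE gt_eqF ?prodr_gt0.
have LT_unit : L^T \in unitmx by rewrite unitmx_tr.
exists (K *m invmx L^T), L^T; split.
- rewrite trmx_mul trmx_inv trmxK mulmxA -(mulmxA _ K^T) KK_chol mulmxA.
  by rewrite mulVmx // mul1mx mulmxV.
- by rewrite trmx_mul trmx_inv trmxK -mulmxA KK_chol mulmxA mulVmx // mul1mx.
- by rewrite trmxK.
- by move=> i; rewrite mxE.
Qed.

End Cholesky.

Lemma diag_mx_quad_ge0 (R : realDomainType) n (d : 'rV[R]_n) (x : 'cV[R]_n) :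
  (forall l, 0 <= d 0 l) -> 0 <= (x^T *m diag_mx d *m x) 0 0.
Proof.
move=> d_ge0; rewrite mul_mx_diag mxE sumr_ge0 // => l _.
by rewrite !mxE mulrAC mulr_ge0 // -expr2 sqr_ge0.
Qed.

Section VandermondeQR.
Variables (R : realFieldType) (n : nat) (a : 'rV[R]_n) (Q M : 'M[R]_n).
Hypotheses (Q_orth : Q^T *m Q = 1%:M) (QTV : Q^T *m (Vandermonde n a)^T = M).
Hypotheses (M_triu : is_trig_mx M^T) (M_diag_gt0 : forall i, 0 < M i i).

Local Notation T := (Q^T *m diag_mx a *m Q).

Lemma QM_Vandermonde : Q *m M = (Vandermonde n a)^T.
Proof. by rewrite -QTV mulmxA (mulmx1C Q_orth) mul1mx. Qed.

Lemma triu_lower0 (i j : 'I_n) : (j < i)%N -> M i j = 0.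
Proof. by move=> lt_ji; have := is_trig_mxP M_triu j i lt_ji; rewrite mxE. Qed.

Lemma Q_first_col (l j : 'I_n) : val j = 0%N -> Q l j = (M j j)^-1.
Proof.
move=> j0; have := congr1 (fun A : 'M_n => A l j) QM_Vandermonde.
rewrite !mxE j0 expr0 (bigD1 j) //= big1 ?addr0 => [QM1|k neq_kj].
  by rewrite -[RHS]mul1r -QM1 mulfK ?gt_eqF.
by rewrite triu_lower0 ?mulr0 // j0 lt0n -j0 val_eqE.
Qed.

(* Multiplying [V^T] by [diag_mx a] shifts its columns one step to the right,
   so [T] is an upper Hessenberg, hence tridiagonal, matrix with positive
   subdiagonal: a nonnegative Jacobi matrix. *)
Lemma mulmx_shift (i k k' : 'I_n) : val k' = k.+1 -> (T *m M) i k = M i k'.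
Proof.
move=> k'E; rewrite -!mulmxA QM_Vandermonde -QTV !mxE; apply: eq_bigr => l _.
by rewrite mul_diag_mx !mxE k'E exprS.
Qed.

Lemma mulmx_triu_entry (i k : 'I_n) :
  (forall j : 'I_n, (j < k)%N -> T i j = 0) ->
  (T *m M) i k = T i k * M k k.
Proof.
move=> Tij0; rewrite mxE (bigD1 k) //= big1 ?addr0 // => j /negbTE neq_jk.
have [lt_jk|lt_kj|/val_inj eq_jk] := ltngtP j k.
- by rewrite Tij0 ?mul0r.
- by rewrite triu_lower0 ?mulr0.
- by rewrite eq_jk eqxx in neq_jk.
Qed.

Lemma jacobi_hessenberg (i k : 'I_n) : (k.+1 < i)%N -> T i k = 0.
Proof.
have [m lt_km] := ubnP (val k); elim: m k lt_km i => // m IH k lt_km i lt_k1i.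
have lt_k1n : (k.+1 < n)%N := ltn_trans lt_k1i (ltn_ord i).
have := @mulmx_shift i k (Ordinal lt_k1n) erefl.
rewrite triu_lower0 // mulmx_triu_entry => [/eqP|j lt_jk]; last first.
  by apply: IH; [exact: leq_trans lt_jk _ | exact: ltn_trans lt_k1i].
by rewrite mulf_eq0 (gt_eqF (M_diag_gt0 k)) orbF => /eqP.
Qed.

Lemma jacobi_subdiag_gt0 (i k : 'I_n) : val i = k.+1 -> 0 < T i k.
Proof.
move=> iE; have := @mulmx_shift i k i iE.
rewrite mulmx_triu_entry => [TM|j lt_jk].
  by have := M_diag_gt0 i; rewrite -TM pmulr_lgt0.
by apply: jacobi_hessenberg; rewrite iE ltnS.
Qed.

Lemma jacobi_sym : T^T = T.
Proof. by rewrite !trmx_mul trmxK tr_diag_mx mulmxA. Qed.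

Hypothesis a_ge0 : forall l, 0 <= a 0 l.

Lemma jacobi_quad_ge0 (x : 'cV[R]_n) : 0 <= (x^T *m T *m x) 0 0.
Proof. by rewrite !mulmxA -trmx_mul -!mulmxA mulmxA diag_mx_quad_ge0. Qed.

Lemma jacobi_diag_ge0 i : 0 <= T i i.
Proof.
by have := jacobi_quad_ge0 (delta_mx i 0); rewrite trmx_delta -rowE -colE !mxE.
Qed.

Lemma jacobi_ge0 i j : 0 <= T i j.
Proof.
wlog le_ji : i j / (j <= i)%N.
  move=> Tlow_ge0; have [/Tlow_ge0//|/ltnW le_ij] := leqP j i.
  by rewrite -jacobi_sym mxE Tlow_ge0.
have [lt_j1i|lt_ij1|iE] := ltngtP j.+1 i.
- by rewrite jacobi_hessenberg.
- suff /val_inj-> : val i = j by exact: jacobi_diag_ge0.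
  by apply/eqP; rewrite eqn_leq le_ji -ltnS lt_ij1.
- by rewrite ltW ?jacobi_subdiag_gt0.
Qed.

End VandermondeQR.

Lemma Vandermonde_unitmx (R : fieldType) n (a : 'rV[R]_n) :
  injective (a 0) -> Vandermonde n a \in unitmx.
Proof.
move=> a_inj; rewrite unitmxE det_Vandermonde unitfE.
rewrite prodf_seq_neq0; apply/allP => i _; rewrite prodf_seq_neq0.
apply/allP => j _; apply/implyP => lt_ij.
by rewrite subr_eq0 (inj_eq a_inj) gt_eqF.
Qed.

Section PolySign.
Variables (R : realFieldType) (a : nat -> R).
Hypothesis a_incr : {homo a : i j / (i < j)%N >-> i < j}.

Lemma poly_lt0_between (F : {poly R}) k r :
  (size F <= k.+3)%N -> (forall i, (i < k.+2)%N -> root F (a i)) ->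
  0 < F.[a k.+2] -> a k < r < a k.+1 -> F.[r] < 0.
Proof.
move=> size_F F_roots F_last /andP[lt_akr lt_rak1].
set rs := [seq a i | i <- iota 0 k.+2].
have F_neq0 : F != 0 by apply: contraTneq F_last => ->; rewrite horner0 ltxx.
have rs_roots : all (root F) rs.
  by apply/allP => x /mapP[i]; rewrite mem_iota add0n => /andP[_ /F_roots ?] ->.
have rs_uniq : uniq_roots rs.
  by rewrite uniq_rootsE map_inj_uniq ?iota_uniq //; exact/inc_inj/le_mono.
have size_rs : size F = (size rs).+1.
  apply/eqP; rewrite eqn_leq size_map size_iota size_F /=.
  have := max_ring_poly_roots F_neq0 rs_roots rs_uniq.
  by rewrite size_map size_iota.
have F_eval x : F.[x] = lead_coef F * \prod_(i <- iota 0 k.+2) (x - a i).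
  rewrite {1}(all_roots_prod_XsubC size_rs rs_roots rs_uniq) hornerZ horner_prod.
  by rewrite big_map; under eq_bigr do rewrite hornerXsubC.
have prod_gt0 x m : a m < x -> 0 < \prod_(i <- iota 0 m.+1) (x - a i).
  move=> lt_amx; rewrite big_seq prodr_gt0 // => i; rewrite mem_iota add0n ltnS.
  move=> /andP[_ le_im]; rewrite subr_gt0 (le_lt_trans _ lt_amx) //.
  exact: (ltW_homo a_incr).
have lc_gt0 : 0 < lead_coef F.
  by move: F_last; rewrite F_eval pmulr_lgt0 // prod_gt0 // a_incr.
rewrite F_eval pmulr_rlt0 // -addn1 iotaD big_cat big_seq1 add0n.
by rewrite pmulr_rlt0 ?subr_lt0 ?prod_gt0.
Qed.

End PolySign.

Lemma ltr_powR (R : realType) (a : R) : 1 < a -> {homo powR a : x y / x < y}.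
Proof.
move=> a_gt1 x y lt_xy; rewrite /powR gt_eqF ?(lt_trans ltr01) //.
by rewrite ltr_expR ltr_pM2r // ln_gt0.
Qed.

Lemma powR_exprn (R : realType) (a t : R) l :
  0 <= a -> powR (a ^+ l) t = powR a t ^+ l.
Proof. by move=> a_ge0; rewrite -powR_mulrn // powRAC powR_mulrn ?powR_ge0. Qed.

Definition pow2_row (R : pzSemiRingType) n : 'rV[R]_n := \row_(l < n) 2 ^+ l.

Section Pow2Nodes.
Variables (R : realFieldType) (n : nat).

Lemma pow2_row_inj : injective (pow2_row R n 0).
Proof.
move=> i j; rewrite !mxE => /ieexprIn pow2_eq; apply/val_inj/pow2_eq => //.
by rewrite pnatr_eq1.
Qed.

Lemma pow2_row_ge0 l : 0 <= pow2_row R n 0 l.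
Proof. by rewrite mxE exprn_ge0. Qed.

Variables Q M : 'M[R]_n.+1.
Hypothesis QTV : Q^T *m (Vandermonde n.+1 (pow2_row R n.+1))^T = M.

(* The nodes are geometric so that [(2 ^+ i) ^+ k = (2 ^+ k) ^+ i]: row [j] of
   [M] then lists the values at the nodes of the polynomial read off column [j]
   of [Q]. *)
Lemma Q_col_poly_pow2 (j k : 'I_n.+1) :
  (\poly_(i < n.+1) Q (inord i) j).[2 ^+ k] = M j k.
Proof.
rewrite -QTV horner_poly mxE; apply: eq_bigr => i _.
by rewrite !mxE inord_val exprAC.
Qed.

End Pow2Nodes.

Lemma mx_rpow_pow2_first_row (R : realType) n (Q M : 'M[R]_n.+1) j t :
    Q^T *m Q = 1%:M -> Q^T *m (Vandermonde n.+1 (pow2_row R n.+1))^T = M ->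
    is_trig_mx M^T -> (forall i, 0 < M i i) ->
  mx_rpow (Q^T *m diag_mx (pow2_row R n.+1) *m Q) t 0 j
    = (M 0 0)^-1 * (\poly_(i < n.+1) Q (inord i) j).[powR 2 t].
Proof.
move=> Q_orth QTV M_triu M_diag_gt0.
have spec : spectral_decomp (Q^T *m diag_mx (pow2_row R n.+1) *m Q)
                             (Q^T, pow2_row R n.+1).
  by split; rewrite /= trmxK // (mulmx1C Q_orth).
rewrite (mx_rpow_spectral _ spec) trmxK mul_mx_diag mxE horner_poly mulr_sumr.
apply: eq_bigr => l _; rewrite !mxE (Q_first_col Q_orth QTV) // inord_val.
by rewrite powR_exprn ?ler0n // mulrAC mulrA.
Qed.

Theorem theorem3p2 (R : realType) (n : nat) :
  (0 < n)%N ->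
  forall m : R, 0 <= m -> dnn_power_exponent n m -> n%:R - 2 <= m.
Proof.
move=> _ m m_ge0; case: n => [|[|[|N]]] m_admissible;
  try by rewrite (le_trans _ m_ge0) // subr_le0 ler_nat.
rewrite -natrB // leNgt; apply/negP => lt_mN1.
have [t [t_gt0 le_mt lt_Nt lt_tN1]] :
    exists t : R, [/\ 0 < t, m <= t, N%:R < t & t < N.+1%:R].
  have N_ge0 : (0 : R) <= N%:R by rewrite ler0n.
  rewrite -natr1 in lt_mN1 *; case: (lerP m N%:R) => [le_mN|lt_Nm].
    by exists (N%:R + 1 / 2); split; lra.
  by exists ((m + N%:R + 1) / 2); split; lra.
have VT_unit : (Vandermonde N.+3 (pow2_row R N.+3))^T \in unitmx.
  by rewrite unitmx_tr Vandermonde_unitmx //; exact: pow2_row_inj.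
have [Q [M [Q_orth QTV M_triu M_diag_gt0]]] := qr_decomp VT_unit.
set T := Q^T *m diag_mx (pow2_row R N.+3) *m Q.
have T_dnn : dnn_mx T.
  split; [split=> [|x]|]; first exact: jacobi_sym.
    exact/jacobi_quad_ge0/pow2_row_ge0.
  exact/(jacobi_ge0 Q_orth QTV M_triu M_diag_gt0)/pow2_row_ge0.
have := (m_admissible t t_gt0 le_mt T T_dnn).2 0 ord_max.
rewrite (mx_rpow_pow2_first_row _ _ Q_orth QTV M_triu M_diag_gt0).
apply/negP; rewrite -ltNge pmulr_rlt0 ?invr_gt0 //.
apply: (@poly_lt0_between _ (fun l => 2 ^+ l)).
- by move=> i j; rewrite ltr_eXn2l // ltr1n.
- exact: size_poly.
- move=> k lt_kN2; have lt_kN3 := leqW lt_kN2.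
  by rewrite rootE (Q_col_poly_pow2 QTV _ (Ordinal lt_kN3)) triu_lower0.
- by rewrite (Q_col_poly_pow2 QTV _ ord_max).
- by rewrite -!powR_mulrn ?ler0n // !ltr_powR ?ltr1n.
Qed.
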